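(* Let $\Sigma_1,\Sigma_2$ be subspaces of the Euclidean space $E_n$ with $1\le \dim\Sigma_1,\dim\Sigma_2\le n-1$, and let $\Sigma_1^*,\Sigma_2^*$ be their orthogonal complements. Then $\varphi(\Sigma_1,\Sigma_2)=\varphi(\Sigma_1^*,\Sigma_2^* )$.
   Context: $E_n$ is $\mathbb R^n$ with its standard inner product $(\cdot,\cdot)$. Angle between subspaces: for nonzero subspaces $S,T$ of $E_n$ with $\dim S=p\le q=\dim T$, choose orthonormal bases $\mathbf a_1,\dots,\mathbf a_p$ of $S$ and $\mathbf b_1,\dots,\mathbf b_q$ of $T$ and let $M$ be the $p\times q$ matrix $M_{ij}=(\mathbf a_i,\mathbf b_j)$. Then $0\le\det(MM^T)\le 1$, and the angle $\varphi(S,T)=\varphi(T,S)\in[0,\pi/2]$ is defined by $\cos^2\varphi(S,T)=\det(MM^T)$ (this does not depend on the choice of orthonormal bases). *)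

From HB Require Import structures.
From mathcomp Require Import all_boot all_order all_algebra.
From mathcomp Require Import reals trigo.
Set Implicit Arguments. Unset Strict Implicit. Unset Printing Implicit Defensive.
Import Order.TTheory GRing.Theory Num.Theory.
Local Open Scope ring_scope.

(* E_n = row vectors 'rV[R]_n with the standard inner product (u,v) = u *m v^T.
   A subspace of E_n is represented by the row space of a matrix S : 'M_n
   (mxalgebra, scope %MS); its dimension is \rank S. *)

(* Orthogonal complement: all u with (u, s) = 0 for every row s of S,
   i.e. u *m S^T = 0; this is the row space of kermx S^T. *)
Definition orthcomp (R : fieldType) (n : nat) (S : 'M[R]_n) : 'M[R]_n :=
  kermx S^T.

Definition orthonormal_basis (R : fieldType) (p n : nat)
  (A : 'M[R]_(p, n)) (S : 'M[R]_n) : bool :=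
  (A *m A^T == 1%:M) && (A == S)%MS.

(* cos^2 of the angle, computed from orthonormal bases A (of S, dim p) and
   B (of T, dim q): with M_ij = (a_i, b_j), det(M M^T) when p <= q,
   and symmetrically det(M^T M) (= det(M' M'^T) with M' = M^T) when p > q. *)
Definition cos2_angle (R : fieldType) (p q n : nat)
  (A : 'M[R]_(p, n)) (B : 'M[R]_(q, n)) : R :=
  let M := A *m B^T in
  if (p <= q)%N then \det (M *m M^T) else \det (M^T *m M).

Definition angle (R : realType) (p q n : nat)
  (A : 'M[R]_(p, n)) (B : 'M[R]_(q, n)) : R :=
  acos (Num.sqrt (cos2_angle A B)).

(* With [M = A B^T], complementarity gives [A^T A + A'^T A' = 1] and
   [B^T B + B'^T B' = 1]; hence [M M^T + X X^T = 1] and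
   [X^T X + M'^T M' = 1] for [X = A B'^T], [M' = A' B'^T].  Sylvester's
   identity [det (1 - X X^T) = det (1 - X^T X)] then identifies the two
   Gram determinants. *)

From HB Require Import structures.
From mathcomp Require Import all_boot all_order all_algebra.
From mathcomp Require Import reals trigo.
Set Implicit Arguments. Unset Strict Implicit. Unset Printing Implicit Defensive.
Import Order.TTheory GRing.Theory Num.Theory.
Local Open Scope ring_scope.

Lemma det_1D_mulmxC (R : comPzRingType) p q (X : 'M[R]_(p, q)) (Y : 'M[R]_(q, p)) :
  \det (1%:M + X *m Y) = \det (1%:M + Y *m X).
Proof.
pose G := block_mx 1%:M X (- Y) 1%:M.
pose H := block_mx (1%:M : 'M[R]_p) (- X) 0 (1%:M : 'M[R]_q).
have detH : \det H = 1 by rewrite det_ublock !det1 mulr1.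
have HG : H *m G = block_mx (1%:M + X *m Y) 0 (- Y) 1%:M.
  rewrite mulmx_block !mul1mx !mul0mx !add0r !mulNmx mulmxN opprK.
  by rewrite mulmx1 subrr.
have GH : G *m H = block_mx 1%:M 0 (- Y) (1%:M + Y *m X).
  rewrite mulmx_block !mulmx1 !mul1mx !mulmx0 !addr0 mulmxN mulNmx opprK.
  by rewrite addNr addrC.
have := congr1 determinant HG; rewrite det_mulmx detH mul1r det_lblock det1 mulr1 => <-.
by have := congr1 determinant GH; rewrite det_mulmx detH mulr1 det_lblock det1 mul1r.
Qed.

Lemma det_compl_gram (R : comPzRingType) m k (U : 'M[R]_m) (V : 'M[R]_k) (X : 'M[R]_(m, k)) :
  U + X *m X^T = 1%:M -> V + X^T *m X = 1%:M -> \det U = \det V.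
Proof.
move=> hU hV.
have -> : U = 1%:M + (- X) *m X^T by rewrite -hU mulNmx addrK.
have -> : V = 1%:M + X^T *m (- X) by rewrite -hV mulmxN addrK.
exact: det_1D_mulmxC.
Qed.

Section OrthonormalRows.

Variable R : fieldType.

Lemma mxrank_orthonormal m n (C : 'M[R]_(m, n)) : C *m C^T = 1%:M -> \rank C = m.
Proof.
move=> hC; apply/eqP; rewrite eqn_leq rank_leq_row /=.
by rewrite -{1}(mxrank1 R m) -hC mxrankM_maxl.
Qed.

Lemma orthonormal_trmx_mul m n (C : 'M[R]_(m, n)) :
  (n <= m)%N -> C *m C^T = 1%:M -> C^T *m C = 1%:M.
Proof.
move=> le_nm hC.
have /row_fullP[D hD] : row_full C.
  by rewrite /row_full eqn_leq rank_leq_col mxrank_orthonormal.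
have DC : D = C^T by rewrite -[D]mulmx1 -hC mulmxA hD mul1mx.
by rewrite -DC.
Qed.

Variables (n p p' : nat) (S : 'M[R]_n) (A : 'M[R]_(p, n)) (A' : 'M[R]_(p', n)).
Hypotheses (oA : orthonormal_basis A S) (oA' : orthonormal_basis A' (orthcomp S)).

Lemma orthonormal_basis_orthcomp_dim : (p + p' = n)%N.
Proof.
move: oA oA' => /andP[/eqP AA eqAS] /andP[/eqP AA' eqA'S].
rewrite -(mxrank_orthonormal AA) -(mxrank_orthonormal AA').
rewrite (eqmx_rank eqAS) (eqmx_rank eqA'S) /orthcomp mxrank_ker mxrank_tr.
by rewrite subnKC // -(mxrank_tr S) rank_leq_row.
Qed.

Lemma orthonormal_basis_orthcomp_mul : A' *m A^T = 0.
Proof.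
move: oA oA' => /andP[_ /andP[/submxP[D ->] _]] /andP[_ /andP[/submxP[E ->] _]].
by rewrite trmx_mul -mulmxA (mulmxA _ S^T) mulmx_ker mul0mx mulmx0.
Qed.

Lemma orthonormal_basis_resolution : A^T *m A + A'^T *m A' = 1%:M.
Proof.
move: oA oA' => /andP[/eqP AA _] /andP[/eqP AA' _].
have A'A := orthonormal_basis_orthcomp_mul.
have AA'0 : A *m A'^T = 0 by rewrite -[A]trmxK -trmx_mul A'A trmx0.
rewrite -mul_row_col -tr_col_mx orthonormal_trmx_mul ?orthonormal_basis_orthcomp_dim //.
by rewrite tr_col_mx mul_col_mx !mul_mx_row AA AA' A'A AA'0 scalar_mx_block.
Qed.

End OrthonormalRows.

Lemma compl_gram_mul (R : comPzRingType) m k k' n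
    (C : 'M[R]_(m, n)) (B : 'M[R]_(k, n)) (B' : 'M[R]_(k', n)) :
  B^T *m B + B'^T *m B' = 1%:M -> C *m C^T = 1%:M ->
  (C *m B^T) *m (C *m B^T)^T + (C *m B'^T) *m (C *m B'^T)^T = 1%:M.
Proof.
move=> hB hC.
have : C *m (B^T *m B + B'^T *m B') *m C^T = 1%:M by rewrite hB mulmx1.
by rewrite mulmxDr mulmxDl !trmx_mul !trmxK !mulmxA.
Qed.

Lemma det_gram_orthcomp (R : comPzRingType) n p p' q q'
    (A : 'M[R]_(p, n)) (A' : 'M[R]_(p', n)) (B : 'M[R]_(q, n)) (B' : 'M[R]_(q', n)) :
  A *m A^T = 1%:M -> B' *m B'^T = 1%:M ->
  A^T *m A + A'^T *m A' = 1%:M -> B^T *m B + B'^T *m B' = 1%:M ->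
  \det ((A *m B^T) *m (A *m B^T)^T) = \det ((A' *m B'^T)^T *m (A' *m B'^T)).
Proof.
move=> AA BB' PA PB.
apply: (det_compl_gram (X := A *m B'^T)); first exact: compl_gram_mul.
by have := compl_gram_mul PA BB'; rewrite addrC !trmx_mul !trmxK.
Qed.

Lemma cos2_angle_orthcomp (R : fieldType) n (S1 S2 : 'M[R]_n) p q p' q'
    (A : 'M[R]_(p, n)) (B : 'M[R]_(q, n)) (A' : 'M[R]_(p', n)) (B' : 'M[R]_(q', n)) :
  orthonormal_basis A S1 -> orthonormal_basis B S2 ->
  orthonormal_basis A' (orthcomp S1) -> orthonormal_basis B' (orthcomp S2) ->
  cos2_angle A B = cos2_angle A' B'.
Proof.
move=> oA oB oA' oB'.
have dims : (p + p' = q + q')%N.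
  by rewrite (orthonormal_basis_orthcomp_dim oA oA') (orthonormal_basis_orthcomp_dim oB oB').
have PA := orthonormal_basis_resolution oA oA'.
have PB := orthonormal_basis_resolution oB oB'.
move: oA oB oA' oB' => /andP[/eqP AA _] /andP[/eqP BB _] /andP[/eqP AA' _] /andP[/eqP BB' _].
have I1 := det_gram_orthcomp AA BB' PA PB.
have I2 := det_gram_orthcomp BB AA' PB PA.
rewrite /cos2_angle; case: (leqP p q) => le_pq; case: (leqP p' q') => le_pq'.
- have eq_q'p' : q' = p'.
    by apply/eqP; rewrite eqn_leq le_pq' andbT -(leq_add2l q) -dims leq_add2r.
  by subst q'; rewrite I1 !det_mulmx !det_tr mulrC.
- exact: I1.
- by rewrite !trmx_mul !trmxK in I2 *.
- by have := leq_add le_pq le_pq'; rewrite addSn addnS -dims ltnNge leqnSn.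
Qed.

Theorem theorem1p3 (R : realType) (n : nat) (S1 S2 : 'M[R]_n)
  (h1 : (1 <= \rank S1 <= n.-1)%N) (h2 : (1 <= \rank S2 <= n.-1)%N)
  (p q p' q' : nat)
  (A : 'M[R]_(p, n)) (B : 'M[R]_(q, n))
  (A' : 'M[R]_(p', n)) (B' : 'M[R]_(q', n)) :
  orthonormal_basis A S1 -> orthonormal_basis B S2 ->
  orthonormal_basis A' (orthcomp S1) -> orthonormal_basis B' (orthcomp S2) ->
  angle A B = angle A' B'.
Proof.
move=> oA oB oA' oB'.
by rewrite /angle (cos2_angle_orthcomp oA oB oA' oB').
Qed.
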